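(* Let $x\cdot y$ be a PA-structure on $(\mathfrak{g},\mathfrak{n})$, where $\mathfrak{g}$ is abelian and $\mathfrak{n}$ is a Heisenberg Lie algebra of dimension $n\ge5$. Then $Z(\mathfrak{n})\cdot\mathfrak{n}=\mathfrak{n}\cdot Z(\mathfrak{n})=0$, and $x\circ y=\frac12(x\cdot y+y\cdot x)$ defines a CPA-structure on $\mathfrak{n}$.
   Context: Let $K$ be a field of characteristic zero and $V$ a finite-dimensional vector space over $K$. Let $\mathfrak{g}=(V,[\,,])$ and $\mathfrak{n}=(V,\{\,,\})$ be two Lie algebra structures on $V$. A post-Lie algebra structure (PA-structure) on the pair $(\mathfrak{g},\mathfrak{n})$ is a $K$-bilinear product $x\cdot y$ on $V$ satisfying, for all $x,y,z\in V$: (i) $x\cdot y-y\cdot x=[x,y]-\{x,y\}$; (ii) $[x,y]\cdot z=x\cdot(y\cdot z)-y\cdot(x\cdot z)$; (iii) $x\cdot\{y,z\}=\{x\cdot y,z\}+\{y,x\cdot z\}$. The Heisenberg Lie algebra of dimension $2m+1$ has a basis $e_1,\dots,e_m,f_1,\dots,f_m,z$ with nonzero brackets $\{e_i,f_i\}=z$ ($1\le i\le m$). $Z(\mathfrak{n})$ is the center. A commutative post-Lie algebra structure (CPA-structure) on $\mathfrak{n}=(V,\{\,,\})$ is a bilinear product $x\circ y$ on $V$ with $x\circ y=y\circ x$, $\{x,y\}\circ z=x\circ(y\circ z)-y\circ(x\circ z)$, and $x\circ\{y,z\}=\{x\circ y,z\}+\{y,x\circ z\}$ for all $x,y,z$.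 *)

From HB Require Import structures.
From mathcomp Require Import all_boot all_order all_algebra.
Set Implicit Arguments. Unset Strict Implicit. Unset Printing Implicit Defensive.
Import GRing.Theory.
Local Open Scope ring_scope.

Section PostLie.
Variables (K : fieldType) (V : vectType K).

Definition bilinear_prod (p : V -> V -> V) : Prop :=
  (forall (a : K) (x y z : V), p (a *: x + y) z = a *: p x z + p y z) /\
  (forall (a : K) (x y z : V), p x (a *: y + z) = a *: p x y + p x z).

Definition is_lie (br : V -> V -> V) : Prop :=
  [/\ bilinear_prod br,
      (forall x, br x x = 0) &
      (forall x y z, br x (br y z) + br y (br z x) + br z (br x y) = 0)].

Definition is_abelian (br : V -> V -> V) : Prop := forall x y, br x y = 0.

Definition in_center (br : V -> V -> V) (c : V) : Prop := forall y, br c y = 0.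

Definition heisenberg_basis (br : V -> V -> V) (m : nat)
    (e f : 'I_m -> V) (z : V) : Prop :=
  [/\ basis_of fullv ([seq e i | i <- enum (ordinal m)] ++ [seq f i | i <- enum (ordinal m)] ++ [:: z]),
      (forall i j, br (e i) (f j) = if i == j then z else 0),
      (forall i j, br (e i) (e j) = 0),
      (forall i j, br (f i) (f j) = 0) &
      (forall i, br (e i) z = 0 /\ br (f i) z = 0)].

Definition is_heisenberg (br : V -> V -> V) : Prop :=
  is_lie br /\ exists m (e f : 'I_m -> V) (z : V), @heisenberg_basis br m e f z.

Definition is_PA (gbr nbr p : V -> V -> V) : Prop :=
  [/\ bilinear_prod p,
      (forall x y, p x y - p y x = gbr x y - nbr x y),
      (forall x y z, p (gbr x y) z = p x (p y z) - p y (p x z)) &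
      (forall x y z, p x (nbr y z) = nbr (p x y) z + nbr y (p x z))].

Definition is_CPA (nbr c : V -> V -> V) : Prop :=
  [/\ bilinear_prod c,
      (forall x y, c x y = c y x),
      (forall x y z, c (nbr x y) z = c x (c y z) - c y (c x z)) &
      (forall x y z, c x (nbr y z) = nbr (c x y) z + nbr y (c x z))].

End PostLie.

From HB Require Import structures.
From mathcomp Require Import all_boot all_order all_algebra.
From mathcomp Require Import zify.

(* As g is abelian, axiom (i) reads y.x = x.y + {x, y}.  Summing axiom (iii)
   cyclically and using that n is 2-step nilpotent gives
   x.{y, w} + y.{w, x} + w.{x, y} = 0; for (y, w) = (e_j, f_j) and x a basis
   vector other than e_j, f_j (possible as dim n >= 5) this says x.z = 0.
   Hence n.Z(n) = Z(n).n = 0 because Z(n) = Kz, so all products with brackets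
   vanish.  Then x o y = x.y + {x, y}/2, and the CPA axioms for o reduce to
   the PA axioms for the product. *)
Set Implicit Arguments. Unset Strict Implicit. Unset Printing Implicit Defensive.
Import GRing.Theory.
Local Open Scope ring_scope.

Section Bilinear.
Variables (K : fieldType) (V : vectType K) (p : V -> V -> V).
Hypothesis hp : bilinear_prod p.

Lemma bilin_linearl z : linear (p ^~ z).
Proof. by move=> a x y; case: hp => + _; apply. Qed.

Lemma bilin_linearr x : linear (p x).
Proof. by move=> a y z; case: hp => _; apply. Qed.

Lemma bilinDl x y z : p (x + y) z = p x z + p y z.
Proof. exact: (GRing.semilinear_linear (bilin_linearl z)).2. Qed.

Lemma bilinDr x y z : p x (y + z) = p x y + p x z.
Proof. exact: (GRing.semilinear_linear (bilin_linearr x)).2. Qed.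

Lemma bilinZl a x z : p (a *: x) z = a *: p x z.
Proof. exact: (GRing.scalable_linear (bilin_linearl z)). Qed.

Lemma bilinZr a x y : p x (a *: y) = a *: p x y.
Proof. exact: (GRing.scalable_linear (bilin_linearr x)). Qed.

Lemma bilin0l z : p 0 z = 0.
Proof. by rewrite -[X in p X z](scale0r 0) bilinZl scale0r. Qed.

Lemma bilin0r x : p x 0 = 0.
Proof. by rewrite -[X in p x X](scale0r 0) bilinZr scale0r. Qed.

Lemma bilinNl x z : p (- x) z = - p x z.
Proof. by rewrite -scaleN1r bilinZl scaleN1r. Qed.

Lemma bilin_suml (I : Type) (r : seq I) (P : pred I) (F : I -> V) z :
  p (\sum_(i <- r | P i) F i) z = \sum_(i <- r | P i) p (F i) z.
Proof. exact: (big_morph (p ^~ z) (fun x y => bilinDl x y z) (bilin0l z)). Qed.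

End Bilinear.

Lemma lie_skew (K : fieldType) (V : vectType K) (br : V -> V -> V) :
  is_lie br -> forall x y, br y x = - br x y.
Proof.
case=> hb h0 _ x y; apply/eqP; rewrite -addr_eq0 addrC.
by have := h0 (x + y); rewrite (bilinDl hb) !(bilinDr hb) !h0 add0r addr0 => ->.
Qed.

Lemma linear_span_eq0 (K : fieldType) (V : vectType K) (F : V -> V) (X : seq V) :
  linear F -> {in X, forall x, F x = 0} -> forall v, v \in <<X>>%VS -> F v = 0.
Proof.
move=> hF hX v /(@coord_span _ _ _ (in_tuple X)) ->.
have FZ a u : F (a *: u) = a *: F u := GRing.scalable_linear hF a u.
have FD : {morph F : x y / x + y} := (GRing.semilinear_linear hF).2.
have F0 : F 0 = 0 by rewrite -[X in F X](scale0r (0 : V)) FZ scale0r.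
rewrite (big_morph F FD F0) big1 // => i _.
by rewrite FZ hX ?scaler0 // mem_nth.
Qed.

Lemma exists_ord_neq m (i : 'I_m) : (1 < m)%N -> exists j : 'I_m, j != i.
Proof.
rewrite -[m in (1 < m)%N]card_ord => /card_gt1P [x [y [_ _ xy]]].
by have [<-|] := eqVneq x i; [exists y; rewrite eq_sym | exists x].
Qed.

Lemma span_fam_coef (K : fieldType) (V : vectType K) m (u : 'I_m -> V) w :
  w \in <<[seq u i | i <- enum 'I_m]>>%VS -> exists c : 'I_m -> K, w = \sum_i c i *: u i.
Proof.
rewrite span_def big_map big_enum /= => /memv_sumP [ws hws ->].
have /fin_all_exists [c hc] i : exists k, ws i = k *: u i by apply/vlineP/hws.
by exists c; apply: eq_bigr.
Qed.

Definition nilpotent2 (K : fieldType) (V : vectType K) (br : V -> V -> V) :=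
  forall a b w, br (br a b) w = 0.

Section Heisenberg.
Variables (K : fieldType) (V : vectType K) (br : V -> V -> V).
Variables (m : nat) (e f : 'I_m -> V) (z : V).
Hypotheses (hl : is_lie br) (hH : heisenberg_basis br e f z).

Let hb : bilinear_prod br. Proof. by case: hl. Qed.
Let skew := lie_skew hl.

Let hbasis := let: And5 h _ _ _ _ := hH in h.

Lemma heisenberg_dim : \dim (fullv : {vspace V}) = (m + m).+1.
Proof.
rewrite (size_basis (X := in_tuple _) hbasis) /= !size_cat !size_map.
by rewrite -enumT size_enum_ord addn1 addnS.
Qed.

Lemma heisenberg_linear_eq0 (F : V -> V) : linear F ->
  (forall i, F (e i) = 0) -> (forall i, F (f i) = 0) -> F z = 0 ->
  forall v, F v = 0.
Proof.
move=> hF he hf hz v; move: (memvf v); rewrite -(span_basis hbasis).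
apply: (linear_span_eq0 hF) => x; rewrite !mem_cat mem_seq1.
by case/or3P => [/mapP [i _ ->] | /mapP [i _ ->] | /eqP ->].
Qed.

Lemma heisenberg_decomp v : exists (a b : 'I_m -> K) (g : K),
  v = \sum_i a i *: e i + \sum_i b i *: f i + g *: z.
Proof.
move: (memvf v); rewrite -(span_basis hbasis) !span_cat span_seq1.
case/memv_addP => u1 /span_fam_coef [a ->] [w /memv_addP [u2 /span_fam_coef [b ->]]].
by case=> [u3 /vlineP [g ->] ->] ->; exists a, b, g; rewrite addrA.
Qed.

Lemma heisenberg_br_xz x : br x z = 0.
Proof.
case: hH => _ _ _ _ hz; case: hl => _ h0 _; move: x.
by apply: (heisenberg_linear_eq0 (bilin_linearl hb z)) => [i|i|]; [case: (hz i)..|].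
Qed.

Lemma heisenberg_br_zx x : br z x = 0.
Proof. by rewrite skew heisenberg_br_xz oppr0. Qed.

Lemma heisenberg_nilpotent2 : nilpotent2 br.
Proof.
case: hH => _ hef hee hff _ a b w; move: a.
apply: heisenberg_linear_eq0 => [k u v|i|i|];
  rewrite ?heisenberg_br_zx ?(bilin0l hb) //.
- by rewrite (bilinDl hb) (bilinZl hb) (bilinDl hb) (bilinZl hb).
- move: b; apply: heisenberg_linear_eq0 => [k u v|j|j|].
  + by rewrite (bilinDr hb) (bilinZr hb) (bilinDl hb) (bilinZl hb).
  + by rewrite hee (bilin0l hb).
  + by rewrite hef; case: eqP => _; rewrite ?heisenberg_br_zx ?(bilin0l hb).
  + by rewrite heisenberg_br_xz (bilin0l hb).
- move: b; apply: heisenberg_linear_eq0 => [k u v|j|j|].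
  + by rewrite (bilinDr hb) (bilinZr hb) (bilinDl hb) (bilinZl hb).
  + rewrite (skew (e j)) hef (bilinNl hb).
    by case: eqP => _; rewrite ?heisenberg_br_zx ?(bilin0l hb) oppr0.
  + by rewrite hff (bilin0l hb).
  + by rewrite heisenberg_br_xz (bilin0l hb).
Qed.

Lemma heisenberg_centerP c : in_center br c -> exists g, c = g *: z.
Proof.
case: hH => _ hef hee hff _ hc; have [a [b [g dc]]] := heisenberg_decomp c.
exists g; have z0 : z != 0.
  by apply: (basis_not0 hbasis); rewrite !mem_cat mem_seq1 eqxx !orbT.
have sum_delta (k : 'I_m -> K) j :
    \sum_i k i *: (if i == j then z else 0) = k j *: z.
  by rewrite (bigD1 j) //= eqxx big1 ?addr0 // => i /negPf ->; rewrite scaler0.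
have coef0 k : k *: z = 0 -> k = 0.
  by move/eqP; rewrite scaler_eq0 (negPf z0) orbF => /eqP.
have a0 j : a j = 0.
  apply: coef0; rewrite -(hc (f j)) dc !(bilinDl hb) (bilinZl hb) heisenberg_br_zx.
  rewrite scaler0 addr0 !(bilin_suml hb) [X in _ + X]big1 ?addr0; last first.
    by move=> i _; rewrite (bilinZl hb) hff scaler0.
  by rewrite -sum_delta; apply: eq_bigr => i _; rewrite (bilinZl hb) hef.
have b0 j : b j = 0.
  apply: coef0; apply: oppr_inj; rewrite oppr0 -(hc (e j)) dc.
  rewrite !(bilinDl hb) (bilinZl hb) heisenberg_br_zx scaler0 addr0.
  rewrite !(bilin_suml hb) big1 ?add0r; last first.
    by move=> i _; rewrite (bilinZl hb) hee scaler0.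
  rewrite -sum_delta -sumrN; apply: eq_bigr => i _.
  by rewrite (bilinZl hb) skew hef eq_sym scalerN.
by rewrite dc !big1 ?add0r // => i _; rewrite ?a0 ?b0 scale0r.
Qed.

End Heisenberg.

Section AbelianPostLie.
Variables (K : fieldType) (V : vectType K) (gbr nbr p : V -> V -> V).
Hypotheses (hl : is_lie nbr) (hgab : is_abelian gbr) (hp : is_PA gbr nbr p).

Let hb : bilinear_prod nbr. Proof. by case: hl. Qed.
Let hpb : bilinear_prod p. Proof. by case: hp. Qed.
Let skew := lie_skew hl.

Lemma PA_abelian_swap x y : p y x = p x y + nbr x y.
Proof.
case: hp => _ hc _ _; have := hc x y; rewrite hgab sub0r => hxy.
by rewrite -[nbr x y]opprK -hxy opprB addrC subrK.
Qed.

Lemma PA_abelian_lmulC x y w : p x (p y w) = p y (p x w).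
Proof.
case: hp => _ _ hassoc _; apply/eqP; rewrite -subr_eq0 -hassoc.
by rewrite hgab (bilin0l hpb).
Qed.

Hypothesis hn2 : nilpotent2 nbr.

Let nbr_nbr_r a b w : nbr w (nbr a b) = 0.
Proof. by rewrite skew hn2 oppr0. Qed.

Lemma PA_abelian_cyclic x y w :
  p x (nbr y w) + p y (nbr w x) + p w (nbr x y) = 0.
Proof.
case: hp => _ _ _ hder; rewrite !hder.
rewrite (PA_abelian_swap x y) (PA_abelian_swap y w) (PA_abelian_swap w x).
rewrite !(bilinDr hb) !nbr_nbr_r !addr0.
rewrite (skew (p x y) w) (skew (p w x) y) (skew (p y w) x).
by rewrite addrAC !subrKA subrr.
Qed.

Hypotheses (hpl : forall a b y, p (nbr a b) y = 0) (hpr : forall a b y, p y (nbr a b) = 0).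

Lemma PA_abelian_nbr_lmulC x y w : nbr x (p y w) = nbr y (p x w).
Proof.
case: hp => _ _ _ hder; have := hder w x y.
rewrite hpr (PA_abelian_swap x w) (PA_abelian_swap y w) (bilinDl hb) (bilinDr hb).
rewrite hn2 nbr_nbr_r !addr0 (skew (p x w) y) => /esym/eqP.
by rewrite addrC addr_eq0 => /eqP.
Qed.

Lemma PA_abelian_sym_CPA : (2%:R : K) != 0 ->
  is_CPA nbr (fun x y => 2%:R^-1 *: (p x y + p y x)).
Proof.
move=> two; case: hp => _ _ _ hder.
have symE x y : 2%:R^-1 *: (p x y + p y x) = p x y + 2%:R^-1 *: nbr x y.
  rewrite (PA_abelian_swap x y) addrA scalerDr -mulr2n -scaler_nat scalerA mulVf //.
  by rewrite scale1r.
split.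
- split=> k x y w; rewrite !symE.
  + by rewrite hpb.1 hb.1 !scalerDr !scalerA mulrC addrACA.
  + by rewrite hpb.2 hb.2 !scalerDr !scalerA mulrC addrACA.
- by move=> x y; rewrite addrC.
- move=> x y w; rewrite !symE hpl hn2 scaler0 addr0.
  rewrite !(bilinDr hpb) !(bilinZr hpb) !(bilinDr hb) !(bilinZr hb).
  by rewrite !nbr_nbr_r !hpr !scaler0 !addr0 PA_abelian_lmulC PA_abelian_nbr_lmulC subrr.
- move=> x y w; rewrite !symE !(bilinDl hb) !(bilinDr hb) !(bilinZl hb) !(bilinZr hb).
  by rewrite !hn2 !nbr_nbr_r !hpr !scaler0 !addr0 -hder hpr.
Qed.

End AbelianPostLie.

Section HeisenbergPostLie.
Variables (K : fieldType) (V : vectType K) (gbr nbr p : V -> V -> V).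
Variables (m : nat) (e f : 'I_m -> V) (z : V).
Hypotheses (hl : is_lie nbr) (hgab : is_abelian gbr) (hp : is_PA gbr nbr p).
Hypotheses (hH : heisenberg_basis nbr e f z) (hm : (1 < m)%N).

Let hpb : bilinear_prod p. Proof. by case: hp. Qed.

(* In the cyclic identity for (x, e_j, f_j), with x a basis vector other than
   e_j and f_j, only the term x.{e_j, f_j} = x.z survives; here m >= 2. *)
Lemma PA_heisenberg_rmul_z x : p x z = 0.
Proof.
have cyc := PA_abelian_cyclic hl hgab hp (heisenberg_nilpotent2 hl hH).
have skew := lie_skew hl.
case: hH => _ hef hee hff _; move: x.
apply: (heisenberg_linear_eq0 hH (bilin_linearl hpb z)) => [i|i|].
- have [j ji] := exists_ord_neq i hm; have := cyc (e i) (e j) (f j).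
  by rewrite hef eqxx (skew (e i)) hef eq_sym (negPf ji) oppr0 hee !(bilin0r hpb) !addr0.
- have [j ji] := exists_ord_neq i hm; have := cyc (f i) (e j) (f j).
  by rewrite hef eqxx (skew (e j)) hef (negPf ji) oppr0 hff !(bilin0r hpb) !addr0.
- have j : 'I_m := Ordinal hm; have := cyc z (e j) (f j).
  rewrite hef eqxx (heisenberg_br_xz hl hH) (heisenberg_br_zx hl hH).
  by rewrite !(bilin0r hpb) !addr0.
Qed.

Lemma PA_heisenberg_center c y : in_center nbr c -> p c y = 0 /\ p y c = 0.
Proof.
move=> /(heisenberg_centerP hl hH) [g ->].
rewrite (bilinZl hpb) (bilinZr hpb) (PA_abelian_swap hgab hp).
by rewrite !PA_heisenberg_rmul_z (heisenberg_br_xz hl hH) addr0 scaler0.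
Qed.

End HeisenbergPostLie.

Theorem proposition4p11 (K : fieldType) (V : vectType K)
    (charK : [pchar K] =i pred0)
    (gbr nbr p : V -> V -> V)
    (hg : is_lie gbr) (hgab : is_abelian gbr)
    (hn : is_heisenberg nbr) (hdim : (5 <= \dim (fullv : {vspace V}))%N)
    (hp : is_PA gbr nbr p) :
  (forall c y, in_center nbr c -> p c y = 0 /\ p y c = 0) /\
  is_CPA nbr (fun x y => 2%:R^-1 *: (p x y + p y x)).
Proof.
case: hn => hl [m [e [f [z hH]]]].
have hm : (1 < m)%N by move: hdim; rewrite (heisenberg_dim hH); lia.
have center := PA_heisenberg_center hl hgab hp hH hm.
have hn2 := heisenberg_nilpotent2 hl hH.
have brbr_central a b : in_center nbr (nbr a b) by move=> w; apply: hn2.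
split=> //; apply: (PA_abelian_sym_CPA hl hgab hp hn2).
- by move=> a b y; case: (center _ y (brbr_central a b)).
- by move=> a b y; case: (center _ y (brbr_central a b)).
- by move/pcharf0P: charK => ->.
Qed.
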